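(* Let $H$ be a complex Hilbert space and $V=\mathcal{L}(H)_{sa}$. Let $a\neq0$ be a projection in $V$ and $u$ a tripotent in $V_{1/2}(a)$ with $a\circ u^2=a$. Let $\gamma_{a,u}(t)=[\exp tG(a,u)]a$ be the geodesic with $\gamma(0)=a$, $\dot\gamma(0)=u$. Then $\gamma_{a,u}(\mathbb{R})\subset V[a,u]$ (the subalgebra generated by $a,u$), and more precisely $$\gamma_{a,u}(t)=(\cos^2t)\,a+(\tfrac12\sin2t)\,u+(\sin^2t)\,u^{(2)},\qquad t\in\mathbb{R},$$ where $u^{(2)}=\{uau\}$.
   Context: $V$ is the set of self-adjoint bounded operators on $H$, a real Jordan algebra with product $x\circ y=\frac12(xy+yx)$ and unit $\mathbf 1$; $u^2=u\circ u$. The triple product is $\{xyz\}=\frac12(xyz+zyx)$ and $(x\square y)z=\{xyz\}$. A projection is $a=a^2=a^*$; a tripotent is $u$ with $\{uuu\}=u$. $V_{1/2}(a)=\{x\in V: a\circ x=\frac12x\}$. For $u\in V_{1/2}(a)$, $G(a,u)=2(u\square a-a\square u)$, a bounded operator on $V$; the curves $t\mapsto[\exp tG(a,u)]a$ are the geodesics through $a$ of the natural affine connection on the manifold of projections. *)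

From HB Require Import structures.
From mathcomp Require Import all_boot all_order all_algebra.
From mathcomp Require Import reals trigo.
From mathcomp Require Import complex.
Set Implicit Arguments. Unset Strict Implicit. Unset Printing Implicit Defensive.
Import Order.TTheory GRing.Theory Num.Theory.
Local Open Scope ring_scope.
Local Open Scope complex_scope.

Section Hilbert.
Variables (R : realType) (H : lmodType R[i]) (ip : H -> H -> R[i]).

Definition hnorm (x : H) : R := Num.sqrt (complex.Re (ip x x)).

Definition is_hilbert : Prop :=
  [/\ (forall (c : R[i]) (x y z : H), ip (c *: x + y) z = c * ip x z + ip y z),
      (forall x y : H, ip y x = conjc (ip x y)),
      (forall x : H, 0 <= ip x x),
      (forall x : H, ip x x = 0 -> x = 0) &
      (forall s : nat -> H,
          (forall e : R, 0 < e -> exists N : nat,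
             forall m n : nat, (N <= m)%N -> (N <= n)%N -> hnorm (s m - s n) < e) ->
          exists l : H, forall e : R, 0 < e -> exists N : nat,
             forall n : nat, (N <= n)%N -> hnorm (s n - l) < e)].

(* operators on H are functions H -> H; L(H) = bounded C-linear ones *)
Definition bounded_op (T : H -> H) : Prop :=
  (forall (c : R[i]) (x y : H), T (c *: x + y) = c *: T x + T y) /\
  exists M : R, forall x : H, hnorm (T x) <= M * hnorm x.

Definition self_adjoint (T : H -> H) : Prop :=
  forall x y : H, ip (T x) y = ip x (T y).

Definition in_V (T : H -> H) : Prop := bounded_op T /\ self_adjoint T.

Definition op_add (S T : H -> H) : H -> H := fun h => S h + T h.
Definition op_scale (r : R) (T : H -> H) : H -> H := fun h => r%:C *: T h.

Definition jprod (x y : H -> H) : H -> H :=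
  fun h => (2^-1 : R)%:C *: (x (y h) + y (x h)).
Definition jtriple (x y z : H -> H) : H -> H :=
  fun h => (2^-1 : R)%:C *: (x (y (z h)) + z (y (x h))).

Definition is_projection (a : H -> H) : Prop := in_V a /\ jprod a a = a.
Definition is_tripotent (u : H -> H) : Prop := in_V u /\ jtriple u u u = u.

Definition in_V_half (a x : H -> H) : Prop :=
  in_V x /\ jprod a x = op_scale (2^-1) x.

(* G(a,u) = 2 (u [] a - a [] u), acting on V *)
Definition Gop (a u : H -> H) (x : H -> H) : H -> H :=
  op_scale 2 (op_add (jtriple u a x) (op_scale (-1) (jtriple a u x))).

Fixpoint Gpow (a u : H -> H) (n : nat) : H -> H :=
  match n with 0 => a | n'.+1 => Gop a u (Gpow a u n') end.

Definition exp_partial (a u : H -> H) (t : R) (n : nat) : H -> H :=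
  fun h => \sum_(k < n) ((t ^+ k / (k`!)%:R)%:C *: Gpow a u k h).

(* convergence in the operator norm (the norm of V) *)
Definition op_cvg (S : nat -> H -> H) (L : H -> H) : Prop :=
  forall e : R, 0 < e -> exists N : nat, forall n : nat, (N <= n)%N ->
    forall h : H, hnorm (S n h - L h) <= e * hnorm h.

(* [exp tG(a,u)] a, defined as the (operator-norm) sum of the exponential
   series applied to a *)
Definition geodesic_at (a u : H -> H) (t : R) (g : H -> H) : Prop :=
  op_cvg (exp_partial a u t) g.

(* V[a,u]: the (real) Jordan subalgebra of V generated by a and u, i.e. the
   intersection of all sets of operators containing a, u and closed under
   sums, real scalar multiples and the Jordan product *)
Definition jordan_closed (S : (H -> H) -> Prop) : Prop :=
  (forall x y, S x -> S y -> S (op_add x y)) /\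
  (forall (r : R) x, S x -> S (op_scale r x)) /\
  (forall x y, S x -> S y -> S (jprod x y)).

Definition in_subalg (a u x : H -> H) : Prop :=
  forall S : (H -> H) -> Prop, jordan_closed S -> S a -> S u -> S x.

End Hilbert.

(* On operators of the form x a + y u + z u^2 (u^2 the operator square),
   the relations a^2 = a, a u + u a = u, u^3 = u and a u^2 + u^2 a = 2a force
   G = G(a,u) to act by a |-> u, u |-> 2u^2 - 4a, u^2 |-> 0.  Hence G^k a has
   coordinates the k-th derivatives at 0 of cos 2t, (sin 2t)/2 and sin^2 t, and
   the exponential series converges, coordinate by coordinate, to
   cos 2t a + (sin 2t)/2 u + sin^2 t u^2, which is the stated formula because
   {uau} = u^2 - a.  The convergence is in operator norm since a and u are
   bounded. *)

From HB Require Import structures.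
From mathcomp Require Import all_boot all_order all_algebra.
From mathcomp Require Import reals trigo.
From mathcomp Require Import complex.
From mathcomp Require Import classical_sets boolp topology normedtype sequences.
From mathcomp Require Import ring lra.
Import Order.TTheory GRing.Theory Num.Theory.
Import numFieldNormedType.Exports.
Set Implicit Arguments. Unset Strict Implicit. Unset Printing Implicit Defensive.
Local Open Scope ring_scope.
Local Open Scope complex_scope.
Local Open Scope classical_set_scope.

Section RealLinearCombination.
Variables (R : realType) (H : lmodType R[i]).

Definition lincomb3 (x y z : H) (al be de : R) : H :=
  al%:C *: x + be%:C *: y + de%:C *: z.

Lemma lincomb3D x y z al be de al' be' de' :
  lincomb3 x y z al be de + lincomb3 x y z al' be' de' =
  lincomb3 x y z (al + al') (be + be') (de + de').
Proof.
rewrite /lincomb3 !rmorphD !scalerDl.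
by rewrite addrACA; congr (_ + _); rewrite addrACA.
Qed.

Lemma lincomb3Z k x y z al be de :
  k%:C *: lincomb3 x y z al be de = lincomb3 x y z (k * al) (k * be) (k * de).
Proof. by rewrite /lincomb3 !scalerDr !scalerA !rmorphM. Qed.

Lemma lincomb3N x y z al be de :
  - lincomb3 x y z al be de = lincomb3 x y z (- al) (- be) (- de).
Proof. by rewrite /lincomb3 !opprD -!scaleNr !rmorphN. Qed.

Lemma lincomb3B x y z al be de al' be' de' :
  lincomb3 x y z al be de - lincomb3 x y z al' be' de' =
  lincomb3 x y z (al - al') (be - be') (de - de').
Proof. by rewrite lincomb3N lincomb3D. Qed.

Lemma lincomb3_sum (I : Type) (r : seq I) (c al be de : I -> R) x y z :
  \sum_(i <- r) (c i)%:C *: lincomb3 x y z (al i) (be i) (de i) =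
  lincomb3 x y z (\sum_(i <- r) c i * al i) (\sum_(i <- r) c i * be i)
                 (\sum_(i <- r) c i * de i).
Proof.
elim: r => [|i r IHr].
  by rewrite !big_nil /lincomb3 rmorph0 !scale0r !addr0.
by rewrite !big_cons IHr lincomb3Z lincomb3D.
Qed.

Lemma lincomb3_addv x y z x' y' z' al be de :
  lincomb3 x y z al be de + lincomb3 x' y' z' al be de =
  lincomb3 (x + x') (y + y') (z + z') al be de.
Proof.
rewrite /lincomb3 !scalerDr.
by rewrite addrACA; congr (_ + _); rewrite addrACA.
Qed.

Lemma lincomb3_oppv x y z al be de :
  - lincomb3 x y z al be de = lincomb3 (- x) (- y) (- z) al be de.
Proof. by rewrite /lincomb3 !scalerN !opprD. Qed.

Lemma lincomb3_comp x y z a1 b1 c1 a2 b2 c2 a3 b3 c3 al be de :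
  lincomb3 (lincomb3 x y z a1 b1 c1) (lincomb3 x y z a2 b2 c2)
           (lincomb3 x y z a3 b3 c3) al be de =
  lincomb3 x y z (al * a1 + be * a2 + de * a3) (al * b1 + be * b2 + de * b3)
                 (al * c1 + be * c2 + de * c3).
Proof. by rewrite [in LHS]/lincomb3 !lincomb3Z !lincomb3D. Qed.

Lemma scale_halfC_eq (v w : H) : ((2^-1 : R)%:C *: v = w) <-> (v = w *+ 2).
Proof.
have halfK : (2%:R : R[i]) * (2^-1 : R)%:C = 1.
  by rewrite -(rmorph_nat (real_complex R)) -rmorphM mulfV ?pnatr_eq0 ?rmorph1.
split=> [<- | ->]; first by rewrite -scaler_nat scalerA halfK scale1r.
by rewrite -[w *+ 2]scaler_nat scalerA mulrC halfK scale1r.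
Qed.

Lemma mulr2n_inj (v w : H) : v *+ 2 = w *+ 2 -> v = w.
Proof. by move=> /scale_halfC_eq <-; apply/esym/scale_halfC_eq. Qed.
End RealLinearCombination.

Section JordanOperations.
Variables (R : realType) (H : lmodType R[i]).
Implicit Types (x y : H -> H) (h : H).

Lemma jprodE x y h : jprod x y h = (2^-1 : R)%:C *: (x (y h) + y (x h)).
Proof. by []. Qed.

Lemma jprod_self x h : jprod x x h = x (x h).
Proof. by apply/scale_halfC_eq; rewrite mulr2n. Qed.

Lemma jtriple_outer x y h : jtriple x y x h = x (y (x h)).
Proof. by apply/scale_halfC_eq; rewrite mulr2n. Qed.

Lemma jprod_idemP x : jprod x x = x -> forall h, x (x h) = x h.
Proof. by move=> xx h; rewrite -jprod_self xx. Qed.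

Lemma jtriple_idemP x : jtriple x x x = x -> forall h, x (x (x h)) = x h.
Proof. by move=> xxx h; rewrite -jtriple_outer xxx. Qed.

Lemma jprod_halfP x y :
  jprod x y = op_scale (2^-1) y -> forall h, x (y h) + y (x h) = y h.
Proof.
move=> xy h; have /scale_halfC_eq -> := congr1 (fun f => f h) xy.
by apply/esym/scale_halfC_eq.
Qed.

Lemma jprod_jprod_selfP x y :
  jprod x (jprod y y) = x -> forall h, x (y (y h)) + y (y (x h)) = x h *+ 2.
Proof.
by move=> xyy h; apply/scale_halfC_eq; rewrite -!jprod_self -jprodE xyy.
Qed.
End JordanOperations.

Section GeneratedSubalgebra.
Variables (R : realType) (H : lmodType R[i]) (a u : H -> H).

Lemma in_subalg_l : in_subalg a u a.
Proof. by move=> S _ Sa _. Qed.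

Lemma in_subalg_r : in_subalg a u u.
Proof. by move=> S _ _ Su. Qed.

Lemma in_subalg_add x y :
  in_subalg a u x -> in_subalg a u y -> in_subalg a u (op_add x y).
Proof. by move=> Sx Sy S hS Sa Su; apply: hS.1; [exact: Sx | exact: Sy]. Qed.

Lemma in_subalg_scale r x : in_subalg a u x -> in_subalg a u (op_scale r x).
Proof. by move=> Sx S hS Sa Su; apply: hS.2.1; exact: Sx. Qed.

Lemma in_subalg_jprod x y :
  in_subalg a u x -> in_subalg a u y -> in_subalg a u (jprod x y).
Proof. by move=> Sx Sy S hS Sa Su; apply: hS.2.2; [exact: Sx | exact: Sy]. Qed.
End GeneratedSubalgebra.

Section LinearMap.
Variables (R : realType) (H : lmodType R[i]) (f : H -> H).
Hypothesis f_linear : linear f.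
HB.instance Definition _ := GRing.isLinear.Build R[i] H H *:%R f f_linear.

Lemma linear_lincomb3 x y z al be de :
  f (lincomb3 x y z al be de) = lincomb3 (f x) (f y) (f z) al be de.
Proof. by rewrite /lincomb3 !linearD !linearZ. Qed.
End LinearMap.

Section DoubleAngleTaylor.
Variable R : realType.
Implicit Types (t : R) (k : nat).

(* k-th derivatives at 0 of cos 2t, (sin 2t)/2 and sin^2 t = (1 - cos 2t)/2 *)
Definition cos2_coef k : R := (~~ odd k)%:R * (-1) ^+ k./2 * 2 ^+ k.
Definition sin2_coef k : R := (odd k)%:R * (-1) ^+ k.-1./2 * 2 ^+ k / 2.
Definition sinsq_coef k : R := ((k == 0)%:R - cos2_coef k) / 2.

Lemma cos2_coef0 : cos2_coef 0 = 1.
Proof. by rewrite /cos2_coef /= !mul1r. Qed.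

Lemma sin2_coef0 : sin2_coef 0 = 0.
Proof. by rewrite /sin2_coef /= !mul0r. Qed.

Lemma sinsq_coef0 : sinsq_coef 0 = 0.
Proof. by rewrite /sinsq_coef cos2_coef0 subrr mul0r. Qed.

Lemma double_or_doubleS k : (exists m, k = m.*2) \/ (exists m, k = m.*2.+1).
Proof.
rewrite -[k]odd_double_half; case: (odd k) => /=; first by right; exists k./2.
by left; exists k./2.
Qed.

Lemma cos2_coefS k : cos2_coef k.+1 = - (4 * sin2_coef k).
Proof.
rewrite /cos2_coef /sin2_coef.
case: (double_or_doubleS k) => -[m ->] /=;
  rewrite ?odd_double ?doubleK ?uphalf_double /=.
  by rewrite !mul0r mulr0 oppr0.
by rewrite !mul1r !exprS; field.
Qed.

Lemma sin2_coefS k : sin2_coef k.+1 = cos2_coef k.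
Proof.
rewrite /cos2_coef /sin2_coef.
case: (double_or_doubleS k) => -[m ->] /=;
  rewrite ?odd_double ?doubleK ?uphalf_double /=.
  by rewrite !mul1r exprS; field.
by rewrite !mul0r.
Qed.

Lemma sinsq_coefS k : sinsq_coef k.+1 = 2 * sin2_coef k.
Proof. by rewrite /sinsq_coef cos2_coefS /=; field. Qed.

Lemma cos_coeff_double t k : cos_coeff (2 * t) k = t ^+ k / k`!%:R * cos2_coef k.
Proof. by rewrite /cos_coeff /cos2_coef /= exprMn -exprnP; ring. Qed.

Lemma sin_coeff_double t k : sin_coeff (2 * t) k / 2 = t ^+ k / k`!%:R * sin2_coef k.
Proof. by rewrite /sin_coeff /sin2_coef /= exprMn; ring. Qed.

Lemma sinsq_coef_cos_coeff t k :
  t ^+ k / k`!%:R * sinsq_coef k = ((k == 0)%:R - cos_coeff (2 * t) k) / 2.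
Proof.
rewrite cos_coeff_double /sinsq_coef; case: k => [|k] /=; last by ring.
by rewrite expr0 divr1 !mul1r.
Qed.
End DoubleAngleTaylor.

Section DoubleAngleSeries.
Variable R : realType.
Implicit Types (t x : R).

Lemma cos_double t : cos (2 * t) = cos t ^+ 2 - sin t ^+ 2.
Proof. by rewrite mulr_natl cos_mulr2n sin2cos2 mulr2n; ring. Qed.

Lemma sin_sqE t : sin t ^+ 2 = (1 - cos (2 * t)) / 2.
Proof. by rewrite cos_double sin2cos2; field. Qed.

Lemma cvg_series_cos x : series (cos_coeff x) @ \oo --> cos x.
Proof. by rewrite unlock; exact: is_cvg_series_cos_coeff. Qed.

Lemma cvg_series_sin x : series (sin_coeff x) @ \oo --> sin x.
Proof. by rewrite unlock; exact: is_cvg_series_sin_coeff. Qed.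

Lemma cvg_cos2_partial t :
  (fun n => \sum_(k < n) t ^+ k / k`!%:R * cos2_coef R k) @ \oo --> cos (2 * t).
Proof.
suff -> : (fun n => \sum_(k < n) t ^+ k / k`!%:R * cos2_coef R k) =
          series (cos_coeff (2 * t)) by exact: cvg_series_cos.
apply/funext => n; rewrite /series /= big_mkord.
by apply: eq_bigr => k _; rewrite cos_coeff_double.
Qed.

Lemma cvg_sin2_partial t :
  (fun n => \sum_(k < n) t ^+ k / k`!%:R * sin2_coef R k) @ \oo
    --> 2^-1 * sin (2 * t).
Proof.
suff -> : (fun n => \sum_(k < n) t ^+ k / k`!%:R * sin2_coef R k) =
          (fun n => 2^-1 * series (sin_coeff (2 * t)) n).
  by apply: cvgMl_tmp; exact: cvg_series_sin.
apply/funext => n; rewrite /series /= big_mkord mulr_sumr.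
by apply: eq_bigr => k _; rewrite -sin_coeff_double mulrC.
Qed.

Lemma cvg_sinsq_partial t :
  (fun n => \sum_(k < n) t ^+ k / k`!%:R * sinsq_coef R k) @ \oo --> sin t ^+ 2.
Proof.
rewrite -cvg_shiftS sin_sqE.
suff -> : [sequence \sum_(k < n.+1) t ^+ k / k`!%:R * sinsq_coef R k]_n =
          (fun n => (1 - series (cos_coeff (2 * t)) n.+1) / 2).
  apply: cvgMr_tmp; apply: cvgB; first exact: cvg_cst.
  by rewrite cvg_shiftS; exact: cvg_series_cos.
apply/funext => n /=; rewrite /series /= big_mkord.
under eq_bigr do rewrite sinsq_coef_cos_coeff.
rewrite -mulr_suml sumrB.
by rewrite [X in X - _]big_ord_recl big1 ?addr0.
Qed.
End DoubleAngleSeries.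

Section InnerProductSpace.
Variables (R : realType) (H : lmodType R[i]) (ip : H -> H -> R[i]).
Hypothesis ip_linear :
  forall (c : R[i]) (x y z : H), ip (c *: x + y) z = c * ip x z + ip y z.
Hypothesis ip_conj : forall x y : H, ip y x = conjc (ip x y).
Hypothesis ip_ge0 : forall x : H, 0 <= ip x x.
Implicit Types (x y z h : H).

Definition sqnorm x : R := complex.Re (ip x x).

Lemma ip0l z : ip 0 z = 0.
Proof. by have := ip_linear (-1) 0 0 z; rewrite scaleN1r addNr mulN1r addNr. Qed.

Lemma ipDl x y z : ip (x + y) z = ip x z + ip y z.
Proof. by have := ip_linear 1 x y z; rewrite scale1r mul1r. Qed.

Lemma ipZl c x z : ip (c *: x) z = c * ip x z.
Proof. by have := ip_linear c x 0 z; rewrite !addr0 ip0l addr0. Qed.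

Lemma ipNl x z : ip (- x) z = - ip x z.
Proof. by rewrite -scaleN1r ipZl mulN1r. Qed.

Lemma ipDr x y z : ip z (x + y) = ip z x + ip z y.
Proof. by rewrite ip_conj ipDl rmorphD /= -!ip_conj. Qed.

Lemma ipNr x z : ip z (- x) = - ip z x.
Proof. by rewrite ip_conj ipNl rmorphN /= -ip_conj. Qed.

Lemma ipZr_real (r : R) x z : ip z (r%:C *: x) = r%:C * ip z x.
Proof. by rewrite ip_conj ipZl rmorphM /= oppr0 -ip_conj. Qed.

Lemma ip_sqnorm x : ip x x = (sqnorm x)%:C.
Proof. by rewrite [LHS]complexE (ger0_Im (ip_ge0 x)) mulr0 addr0. Qed.

Lemma sqnorm_ge0 x : 0 <= sqnorm x.
Proof. by have := ip_ge0 x; rewrite lecE => /andP[_ ->]. Qed.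

Lemma sqnormZ (r : R) x : sqnorm (r%:C *: x) = r ^+ 2 * sqnorm x.
Proof.
by rewrite /sqnorm ipZl ipZr_real ip_sqnorm -!rmorphM /= mulrA expr2.
Qed.

Lemma sqnormD_le x y : sqnorm (x + y) <= 2 * sqnorm x + 2 * sqnorm y.
Proof.
have parallelogram : sqnorm (x + y) + sqnorm (x - y) = 2 * sqnorm x + 2 * sqnorm y.
  have : ip (x + y) (x + y) + ip (x - y) (x - y) = 2 * ip x x + 2 * ip y y.
    by rewrite !ipDl !ipDr !ipNl !ipNr; ring.
  rewrite !ip_sqnorm -(rmorph_nat (real_complex R) 2) -!rmorphM -!rmorphD.
  exact: complexI.
by have := sqnorm_ge0 (x - y); lra.
Qed.

Lemma sqnorm_lincomb3_le x y z al be de :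
  sqnorm (lincomb3 x y z al be de) <=
  4 * (al ^+ 2 * sqnorm x + be ^+ 2 * sqnorm y + de ^+ 2 * sqnorm z).
Proof.
have := sqnormD_le (al%:C *: x + be%:C *: y) (de%:C *: z).
have := sqnormD_le (al%:C *: x) (be%:C *: y).
rewrite /lincomb3 !sqnormZ.
have := sqnorm_ge0 x; have := sqnorm_ge0 y; have := sqnorm_ge0 z.
have := sqr_ge0 al; have := sqr_ge0 be; have := sqr_ge0 de.
nra.
Qed.

Lemma sqnorm_le_of_hnorm_le (T : H -> H) (M : R) :
  (forall h, hnorm ip (T h) <= M * hnorm ip h) ->
  forall h, sqnorm (T h) <= M ^+ 2 * sqnorm h.
Proof.
move=> T_bound h; have := T_bound h; rewrite /hnorm -/(sqnorm _) -/(sqnorm h).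
rewrite -{2}(sqr_sqrtr (sqnorm_ge0 (T h))) -{2}(sqr_sqrtr (sqnorm_ge0 h)).
by have := sqrtr_ge0 (sqnorm (T h)); have := sqrtr_ge0 (sqnorm h); nra.
Qed.

Lemma hnorm_le_of_sqnorm_le (e : R) v h :
  0 < e -> sqnorm v <= e ^+ 2 * sqnorm h -> hnorm ip v <= e * hnorm ip h.
Proof.
move=> e_gt0 /ler_wsqrtr; rewrite sqrtrM ?sqr_ge0 // sqrtr_sqr gtr0_norm //.
Qed.

Lemma op_cvg_lincomb3 (f g k : H -> H) (Mf Mg Mk : R) (al be de : R^nat)
    (al0 be0 de0 : R) :
  (forall h, sqnorm (f h) <= Mf * sqnorm h) ->
  (forall h, sqnorm (g h) <= Mg * sqnorm h) ->
  (forall h, sqnorm (k h) <= Mk * sqnorm h) ->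
  al @ \oo --> al0 -> be @ \oo --> be0 -> de @ \oo --> de0 ->
  op_cvg ip (fun n h => lincomb3 (f h) (g h) (k h) (al n) (be n) (de n))
            (fun h => lincomb3 (f h) (g h) (k h) al0 be0 de0).
Proof.
move=> f_bound g_bound k_bound al_cvg be_cvg de_cvg e e_gt0.
have sq_dist0 (s : R^nat) s0 : s @ \oo --> s0 ->
    (fun n => (s n - s0) ^+ 2) @ \oo --> (0 : R).
  move=> s_cvg; have d_cvg : (fun n => s n - s0) @ \oo --> (0 : R).
    by rewrite -(subrr s0); apply: cvgB => //; exact: cvg_cst.
  by rewrite -(mulr0 0); exact: (cvgM d_cvg d_cvg).
pose err n := 4 * ((al n - al0) ^+ 2 * Mf + (be n - be0) ^+ 2 * Mg
                   + (de n - de0) ^+ 2 * Mk).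
have err_cvg : err @ \oo --> (0 : R).
  suff : err @ \oo --> 4 * (0 * Mf + 0 * Mg + 0 * Mk) by rewrite !mul0r !addr0 mulr0.
  exact: (cvgMl_tmp (cvgD (cvgD (cvgMr_tmp (sq_dist0 _ _ al_cvg))
    (cvgMr_tmp (sq_dist0 _ _ be_cvg))) (cvgMr_tmp (sq_dist0 _ _ de_cvg)))).
have [N _ err_small] := cvgr_lt _ err_cvg _ (exprn_gt0 2 e_gt0).
exists N => n /err_small err_lt h; rewrite lincomb3B.
apply: hnorm_le_of_sqnorm_le e_gt0 _.
apply: le_trans (sqnorm_lincomb3_le _ _ _ _ _ _) _.
have := ler_wpM2r (sqnorm_ge0 h) (ltW err_lt).
have := ler_wpM2l (sqr_ge0 (al n - al0)) (f_bound h).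
have := ler_wpM2l (sqr_ge0 (be n - be0)) (g_bound h).
have := ler_wpM2l (sqr_ge0 (de n - de0)) (k_bound h).
rewrite /err; lra.
Qed.
End InnerProductSpace.

Section PeirceAction.
Variables (R : realType) (H : lmodType R[i]) (a u : H -> H).
Hypotheses (a_linear : linear a) (u_linear : linear u).
HB.instance Definition _ := GRing.isLinear.Build R[i] H H *:%R a a_linear.
HB.instance Definition _ := GRing.isLinear.Build R[i] H H *:%R u u_linear.

Lemma GopE x h :
  Gop a u x h = u (a (x h)) + x (a (u h)) - (a (u (x h)) + x (u (a h))).
Proof.
have half2 : (2 : R) * 2^-1 = 1 by rewrite mulfV // pnatr_eq0.
rewrite /Gop /op_scale /op_add /jtriple scalerDr !scalerA -!rmorphM.
by rewrite mulrN1 mulNr half2 rmorphN1 rmorph1 scaleN1r scale1r.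
Qed.

Lemma Gop_lincomb3 (f g k : H -> H) al be de h :
  Gop a u (fun h => lincomb3 (f h) (g h) (k h) al be de) h =
  lincomb3 (Gop a u f h) (Gop a u g h) (Gop a u k h) al be de.
Proof.
rewrite !GopE !(linear_lincomb3 a_linear, linear_lincomb3 u_linear).
by rewrite lincomb3_addv lincomb3_addv lincomb3_oppv lincomb3_addv.
Qed.

Hypothesis a_idem : forall x, a (a x) = a x.
Hypothesis u_peirce_half : forall x, a (u x) + u (a x) = u x.
Hypothesis u_tripotent : forall x, u (u (u x)) = u x.
Hypothesis a_jprod_u2 : forall x, a (u (u x)) + u (u (a x)) = a x *+ 2.

Lemma u_a x : u (a x) = u x - a (u x).
Proof. by apply/eqP; rewrite eq_sym subr_eq addrC u_peirce_half. Qed.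

Lemma u2_a x : u (u (a x)) = a (u (u x)).
Proof. by rewrite u_a linearB /= u_a opprB addrC subrK. Qed.

Lemma a_u2 x : a (u (u x)) = a x.
Proof.
by apply: mulr2n_inj; rewrite -(a_jprod_u2 x) u2_a mulr2n.
Qed.

Lemma a_u_a x : a (u (a x)) = 0.
Proof. by rewrite u_a linearB /= a_idem subrr. Qed.

Lemma u_a_u x : u (a (u x)) = u (u x) - a x.
Proof. by rewrite u_a a_u2. Qed.

Definition auu_comb (al be de : R) : H -> H :=
  fun h => lincomb3 (a h) (u h) (u (u h)) al be de.

Lemma Gop_a h : Gop a u a h = auu_comb 0 1 0 h.
Proof.
rewrite GopE !a_idem a_u_a addr0 subr0 addrC u_peirce_half.
by rewrite /auu_comb /lincomb3 rmorph0 rmorph1 !scale0r scale1r add0r addr0.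
Qed.

Lemma Gop_u h : Gop a u u h = auu_comb (-4) 0 2 h.
Proof.
rewrite GopE u_a_u a_jprod_u2 /auu_comb /lincomb3 rmorph0 scale0r addr0.
rewrite rmorphN !rmorph_nat scaleNr !scaler_nat -mulr2n mulrnBl.
by rewrite -addrA -opprD -mulrnDr addrC.
Qed.

Lemma Gop_u2 h : Gop a u (fun h => u (u h)) h = auu_comb 0 0 0 h.
Proof.
rewrite GopE (u2_a (u h)) !u_tripotent u_a_u u_tripotent u_a.
rewrite subrK subrKC subrr.
by rewrite /auu_comb /lincomb3 rmorph0 !scale0r !addr0.
Qed.

Lemma Gop_auu_comb al be de h :
  Gop a u (auu_comb al be de) h = auu_comb (- (4 * be)) al (2 * be) h.
Proof.
rewrite [auu_comb al be de]/auu_comb (Gop_lincomb3 a u (fun h => u (u h))).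
rewrite Gop_a Gop_u Gop_u2 /auu_comb lincomb3_comp.
by congr lincomb3; ring.
Qed.

Lemma Gpow_auu_comb k :
  Gpow a u k = auu_comb (cos2_coef R k) (sin2_coef R k) (sinsq_coef R k).
Proof.
elim: k => [|k IHk]; apply: funext => h /=.
  rewrite cos2_coef0 sin2_coef0 sinsq_coef0 /auu_comb /lincomb3.
  by rewrite rmorph1 rmorph0 scale1r !scale0r !addr0.
by rewrite IHk Gop_auu_comb cos2_coefS sin2_coefS sinsq_coefS.
Qed.

Lemma jtriple_u_a_u : jtriple u a u = op_add (jprod u u) (op_scale (-1) a).
Proof.
apply/funext => h; rewrite /op_add /op_scale jtriple_outer jprod_self.
by rewrite u_a_u rmorphN1 scaleN1r.
Qed.

Lemma in_subalg_jtriple_u_a_u : in_subalg a u (jtriple u a u).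
Proof.
rewrite jtriple_u_a_u; apply: in_subalg_add.
  by apply: in_subalg_jprod; exact: in_subalg_r.
by apply: in_subalg_scale; exact: in_subalg_l.
Qed.

Lemma geodesic_formulaE t :
  op_add (op_add (op_scale (cos t ^+ 2) a) (op_scale (2^-1 * sin (2 * t)) u))
         (op_scale (sin t ^+ 2) (jtriple u a u)) =
  auu_comb (cos (2 * t)) (2^-1 * sin (2 * t)) (sin t ^+ 2).
Proof.
apply/funext => h; rewrite jtriple_u_a_u /op_add /op_scale jprod_self rmorphN1 scaleN1r.
have -> : forall c s : R, c%:C *: a h + s%:C *: u h =
    lincomb3 (a h) (u h) (u (u h)) c s 0.
  by move=> c s; rewrite /lincomb3 rmorph0 scale0r addr0.
have -> : (sin t ^+ 2)%:C *: (u (u h) - a h) =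
    lincomb3 (a h) (u h) (u (u h)) (- sin t ^+ 2) 0 (sin t ^+ 2).
  by rewrite /lincomb3 rmorph0 scale0r addr0 rmorphN scaleNr scalerBr addrC.
by rewrite lincomb3D cos_double addr0 add0r.
Qed.

Lemma exp_partialE t :
  exp_partial a u t =
  fun n => auu_comb (\sum_(k < n) t ^+ k / k`!%:R * cos2_coef R k)
                    (\sum_(k < n) t ^+ k / k`!%:R * sin2_coef R k)
                    (\sum_(k < n) t ^+ k / k`!%:R * sinsq_coef R k).
Proof.
apply/funext => n; apply/funext => h; rewrite /exp_partial.
under eq_bigr do rewrite Gpow_auu_comb.
exact: lincomb3_sum.
Qed.
End PeirceAction.

Theorem theorem2p3 (R : realType) (H : lmodType R[i]) (ip : H -> H -> R[i])
  (hilb : is_hilbert ip) (a u : H -> H) :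
  is_projection ip a -> (exists h : H, a h <> 0) ->
  is_tripotent ip u -> in_V_half ip a u ->
  jprod a (jprod u u) = a ->
  forall t : R,
    geodesic_at ip a u t
      (op_add (op_add (op_scale (cos t ^+ 2) a)
                    (op_scale (2^-1 * sin (2 * t)) u))
            (op_scale (sin t ^+ 2) (jtriple u a u)))
    /\ in_subalg a u
      (op_add (op_add (op_scale (cos t ^+ 2) a)
                    (op_scale (2^-1 * sin (2 * t)) u))
            (op_scale (sin t ^+ 2) (jtriple u a u))).
Proof.
move=> [[[a_lin [Ma a_bound]] _] /jprod_idemP a_idem] _.
move=> [[[u_lin [Mu u_bound]] _] /jtriple_idemP u_tri] [_ /jprod_halfP u_half].
move=> /jprod_jprod_selfP a_u2 t; case: hilb => ip_lin ip_conj ip_ge0 _ _.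
split; last first.
  apply: in_subalg_add; first apply: in_subalg_add.
  - by apply: in_subalg_scale; exact: in_subalg_l.
  - by apply: in_subalg_scale; exact: in_subalg_r.
  - by apply: in_subalg_scale; exact: in_subalg_jtriple_u_a_u.
have sq_a := sqnorm_le_of_hnorm_le ip_ge0 a_bound.
have sq_u := sqnorm_le_of_hnorm_le ip_ge0 u_bound.
have sq_uu h : sqnorm ip (u (u h)) <= Mu ^+ 2 * Mu ^+ 2 * sqnorm ip h.
  by rewrite -mulrA; apply: le_trans (sq_u _) (ler_wpM2l (sqr_ge0 Mu) (sq_u h)).
rewrite /geodesic_at (geodesic_formulaE u_lin u_half a_u2).
rewrite (exp_partialE a_lin u_lin a_idem u_half u_tri a_u2) /auu_comb.
apply: (op_cvg_lincomb3 ip_lin ip_conj ip_ge0 sq_a sq_u sq_uu).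
- exact: cvg_cos2_partial.
- exact: cvg_sin2_partial.
- exact: cvg_sinsq_partial.
Qed.
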